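(* Let $\mathcal E$ be an exchangeability system for a noncommutative probability space $(\mathcal A,\phi)$, let $X_1,\dots,X_n\in\mathcal A$, let $\omega$ be a primitive $n$-th root of unity and $X_j^\omega=\sum_{k=1}^n\omega^kX_j^{(k)}$. If $j_1<j_2<\dots<j_m$ is a subsequence of $1,2,\dots,n$ with $m<n$, then $\tilde\phi(X_{j_1}^\omega X_{j_2}^\omega\cdots X_{j_m}^\omega)=0$.
   Context: A noncommutative probability space is a pair $(\mathcal A,\phi)$ of a complex unital algebra $\mathcal A$ and a unital linear functional $\phi$. An exchangeability system $\mathcal E$ for $(\mathcal A,\phi)$ consists of a noncommutative probability space $(\mathcal U,\tilde\phi)$ and a family $(\iota_k)_{k\in\mathbb N}$ of embeddings (injective unital algebra homomorphisms) $\iota_k:\mathcal A\to\mathcal A_k\subseteq\mathcal U$ with $\tilde\phi\circ\iota_k=\phi$; write $X^{(k)}=\iota_k(X)$. It is required that for all $X_1,\dots,X_n\in\mathcal A$, all indices $i_1,\dots,i_n\in\mathbb N$ and every bijection $\sigma$ of $\mathbb N$, $\tilde\phi(X_1^{(i_1)}\cdots X_n^{(i_n)})=\tilde\phi(X_1^{(\sigma(i_1))}\cdots X_n^{(\sigma(i_n))})$. *)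

From HB Require Import structures.
From mathcomp Require Import all_boot all_order all_algebra.
From mathcomp Require Import reals.
From mathcomp Require Import complex.
Set Implicit Arguments. Unset Strict Implicit. Unset Printing Implicit Defensive.
Import Order.TTheory GRing.Theory Num.Theory.
Local Open Scope ring_scope.

Definition unital_linear_functional (C : fieldType) (A : algType C)
  (phi : A -> C) : Prop :=
  (forall (a : C) (x y : A), phi (a *: x + y) = a * phi x + phi y)
  /\ phi 1 = 1.

Definition algebra_embedding (C : fieldType) (A U : algType C)
  (f : A -> U) : Prop :=
  [/\ forall (a : C) (x y : A), f (a *: x + y) = a *: f x + f y,
      forall x y : A, f (x * y) = f x * f y,
      f 1 = 1 & injective f].

(* Exchangeability system (U, phit, (iota k)_k) for (A, phi); indices k : nat.
   Words X_1^(i_1) ... X_n^(i_n) are encoded as sequences of pairs (X_l, i_l). *)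
Definition exchangeability_system (C : fieldType) (A U : algType C)
  (phi : A -> C) (phit : U -> C) (iota : nat -> A -> U) : Prop :=
  [/\ unital_linear_functional phit,
      forall k, algebra_embedding (iota k),
      forall k (X : A), phit (iota k X) = phi X &
      forall (w : seq (A * nat)) (sigma : nat -> nat), bijective sigma ->
        phit (\prod_(p <- w) iota p.2 p.1)
        = phit (\prod_(p <- w) iota (sigma p.2) p.1)].

(* X^omega = sum_{k=1}^n omega^k X^(k); the paper's index k in {1,...,n}
   corresponds to our index k-1 in {0,...,n-1} (indices shifted by one). *)
Definition Xomega (C : fieldType) (A U : algType C) (iota : nat -> A -> U)
  (n : nat) (omega : C) (X : A) : U :=
  \sum_(k < n) omega ^+ k.+1 *: iota k X.

From HB Require Import structures.
From mathcomp Require Import all_boot all_order all_algebra.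
From mathcomp Require Import reals.
From mathcomp Require Import complex.
Set Implicit Arguments. Unset Strict Implicit. Unset Printing Implicit Defensive.
Import Order.TTheory GRing.Theory Num.Theory.
Local Open Scope ring_scope.

(* Expanding the product, the moment M = phit (X_{j_1}^omega ... X_{j_m}^omega)
   is a sum over index maps f : {1..m} -> {1..n} of
   omega^(f 1 + ... + f m) phit (X_{j_1}^(f 1) ... X_{j_m}^(f m)).
   Composing every f with the cyclic shift k |-> k+1 mod n (a bijection of
   the indices) leaves each moment unchanged by exchangeability, while the
   coefficient gains a factor omega per letter.  Hence M = omega^m M, and
   omega^m <> 1 because 0 < m < n. *)

Section LinearFunctional.

Variables (C : fieldType) (U : lmodType C) (psi : U -> C).
Hypothesis psi_lin : forall (a : C) (x y : U), psi (a *: x + y) = a * psi x + psi y.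

Lemma lfun0 : psi 0 = 0.
Proof. by have := psi_lin (-1) 0 0; rewrite scaler0 addr0 mulN1r addNr. Qed.

Lemma lfun_sumZ (I : finType) (a : I -> C) (x : I -> U) :
  psi (\sum_i a i *: x i) = \sum_i a i * psi (x i).
Proof.
apply: (big_rec2 (fun u c => psi u = c)); first exact: lfun0.
by move=> i u c _ <-; rewrite psi_lin.
Qed.

End LinearFunctional.

Definition cyclen (n k : nat) : nat := if (k < n)%N then (k.+1 %% n)%N else k.
Definition cyclen_inv (n k : nat) : nat :=
  if (k < n)%N then ((k + n).-1 %% n)%N else k.

Lemma cyclen_ord n (i : 'I_n) : cyclen n i = ordS i.
Proof. by rewrite /cyclen ltn_ord. Qed.

Lemma cyclen_inv_ord n (i : 'I_n) : cyclen_inv n i = ord_pred i.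
Proof. by rewrite /cyclen_inv ltn_ord. Qed.

Lemma cyclen_ge n k : (n <= k)%N -> cyclen n k = k.
Proof. by rewrite /cyclen ltnNge => ->. Qed.

Lemma cyclen_inv_ge n k : (n <= k)%N -> cyclen_inv n k = k.
Proof. by rewrite /cyclen_inv ltnNge => ->. Qed.

Lemma cyclen_bij n : bijective (cyclen n).
Proof.
exists (cyclen_inv n) => k; case: (ltnP k n) => [lt_kn | le_nk].
- by have -> : k = Ordinal lt_kn by []; rewrite cyclen_ord cyclen_inv_ord ordSK.
- by rewrite cyclen_ge // cyclen_inv_ge.
- by have -> : k = Ordinal lt_kn by []; rewrite cyclen_inv_ord cyclen_ord ord_predK.
- by rewrite cyclen_inv_ge // cyclen_ge.
Qed.

Lemma prod_Xomega (C : fieldType) (A U : algType C) (iota : nat -> A -> U)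
    (n : nat) (omega : C) (m : nat) (F : 'I_m -> A) :
  \prod_(i < m) Xomega iota n omega (F i)
  = \sum_(f : {ffun 'I_m -> 'I_n})
      (\prod_i omega ^+ (f i).+1) *: \prod_i iota (f i) (F i).
Proof.
rewrite /Xomega bigA_distr_bigA /=.
by apply: eq_bigr => f _; rewrite scaler_prod.
Qed.

Lemma prod_expr_ordS (C : fieldType) (n : nat) (omega : C) (m : nat)
    (f : 'I_m -> 'I_n) :
  omega ^+ n = 1 ->
  \prod_i omega ^+ (ordS (f i)).+1 = omega ^+ m * \prod_i omega ^+ (f i).+1.
Proof.
move=> omega_n; rewrite -[in omega ^+ m](card_ord m) -prodr_const -big_split /=.
by apply: eq_bigr => i _; rewrite exprS (expr_mod _ omega_n) -exprS.
Qed.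

Section ExchangeabilitySystem.

Variables (C : fieldType) (A U : algType C).
Variables (phi : A -> C) (phit : U -> C) (iota : nat -> A -> U).
Hypothesis hE : exchangeability_system phi phit iota.

Lemma exchangeable_prod (sigma : nat -> nat) (I : Type) (r : seq I)
    (F : I -> A) (k : I -> nat) :
  bijective sigma ->
  phit (\prod_(i <- r) iota (sigma (k i)) (F i))
  = phit (\prod_(i <- r) iota (k i) (F i)).
Proof.
case: hE => _ _ _ hex sigma_bij.
by have := hex [seq (F i, k i) | i <- r] _ sigma_bij; rewrite !big_map => ->.
Qed.

Lemma moment_Xomega_rot (n : nat) (omega : C) (m : nat) (F : 'I_m -> A) :
  omega ^+ n = 1 ->
  phit (\prod_(i < m) Xomega iota n omega (F i))
  = omega ^+ m * phit (\prod_(i < m) Xomega iota n omega (F i)).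
Proof.
move=> omega_n; have [[phit_lin _] _ _ _] := hE.
pose rot (f : {ffun 'I_m -> 'I_n}) : {ffun 'I_m -> 'I_n} := [ffun i => ordS (f i)].
have rot_inj : injective rot.
  move=> f g /ffunP fg; apply/ffunP => i.
  by have := fg i; rewrite !ffunE => /(can_inj (@ordSK n)).
rewrite prod_Xomega !lfun_sumZ // {1}(reindex_inj rot_inj) mulr_sumr.
apply: eq_bigr => f _; rewrite mulrA; congr (_ * _).
  by under eq_bigr do rewrite ffunE; exact: prod_expr_ordS.
rewrite -(exchangeable_prod _ F (fun i => val (f i)) (cyclen_bij n)).
by congr phit; apply: eq_bigr => i _; rewrite ffunE cyclen_ord.
Qed.

End ExchangeabilitySystem.

Theorem lemma2p4 (R : realType) (A U : algType R[i])
  (phi : A -> R[i]) (phit : U -> R[i]) (iota : nat -> A -> U)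
  (hphi : unital_linear_functional phi)
  (hE : exchangeability_system phi phit iota)
  (n : nat) (X : 'I_n -> A) (omega : R[i])
  (homega : n.-primitive_root omega)
  (s : seq 'I_n)
  (hs : sorted (fun a b : 'I_n => (a < b)%N) s)
  (hm0 : (0 < size s)%N) (hmn : (size s < n)%N) :
  phit (\prod_(j <- s) Xomega iota n omega (X j)) = 0.
Proof.
have omega_m_neq1 : omega ^+ size s != 1 by rewrite -(prim_order_dvd homega) gtnNdvd.
rewrite -(big_map X xpredT) (big_nth 0) big_mkord /=.
have := moment_Xomega_rot hE (fun i : 'I_(size (map X s)) => (map X s)`_i)
  (prim_expr_order homega).
rewrite [in omega ^+ _]size_map; move: (phit _) => M M_rot.
have : (1 - omega ^+ size s) * M = 0 by rewrite mulrBl mul1r -M_rot subrr.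
by move/eqP; rewrite mulf_eq0 subr_eq0 eq_sym (negbTE omega_m_neq1) => /eqP.
Qed.
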